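(* Let $\mathcal P,\mathcal Q$ be sets of propositional letters and let $(M,X)$, $(N,Y)$ be team models with $(M,X)\rightleftharpoons_{\mathcal P\cap\mathcal Q}(N,Y)$. Then there is a team model $(K,Z)$ such that $(M,X)\rightleftharpoons_{\mathcal P}(K,Z)$ and $(K,Z)\rightleftharpoons_{\mathcal Q}(N,Y)$.
   Context: A Kripke model is $M=(W,R,V)$ with $W$ nonempty, $R\subseteq W\times W$, $V:W\to\mathcal P(Prop)$; a team model is $(M,X)$ with $X\subseteq W$. For a set $\mathcal P$ of letters, a $\mathcal P$-bisimulation between $M=(W,R,V)$ and $M'=(W',R',V')$ is $B\subseteq W\times W'$ such that for all $(v,v')\in B$: $V(v)\cap\mathcal P=V'(v')\cap\mathcal P$; if $vRu$ there is $u'$ with $v'R'u'$ and $(u,u')\in B$; if $v'R'u'$ there is $u$ with $vRu$ and $(u,u')\in B$. $(M,w)\rightleftharpoons_{\mathcal P}(M',w')$ means some $\mathcal P$-bisimulation contains $(w,w')$. Team models are $\mathcal P$-bisimilar, $(M,X)\rightleftharpoons_{\mathcal P}(N,Y)$, if for every $x\in X$ there is $y\in Y$ with $(M,x)\rightleftharpoons_{\mathcal P}(N,y)$ and for every $y\in Y$ there is $x\in X$ with $(M,x)\rightleftharpoons_{\mathcal P}(N,y)$. *)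

Record kmodel (Letter : Type) := KModel {
  world : Type;
  world_nonempty : inhabited world;
  rel : world -> world -> Prop;
  val : world -> Letter -> Prop
}.
Arguments world {Letter}.
Arguments rel {Letter}.
Arguments val {Letter}.

Definition letters (Letter : Type) := Letter -> Prop.

Definition is_bisim {Letter : Type} (P : letters Letter)
  (M M' : kmodel Letter) (B : world M -> world M' -> Prop) : Prop :=
  forall v v', B v v' ->
    (forall p, P p -> (val M v p <-> val M' v' p)) /\
    (forall u, rel M v u -> exists u', rel M' v' u' /\ B u u') /\
    (forall u', rel M' v' u' -> exists u, rel M v u /\ B u u').

Definition bisim_pt {Letter : Type} (P : letters Letter)
  (M : kmodel Letter) (w : world M) (M' : kmodel Letter) (w' : world M') : Prop :=
  exists B, is_bisim P M M' B /\ B w w'.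

Definition bisim_team {Letter : Type} (P : letters Letter)
  (M : kmodel Letter) (X : world M -> Prop) (N : kmodel Letter) (Y : world N -> Prop) : Prop :=
  (forall x, X x -> exists y, Y y /\ bisim_pt P M x N y) /\
  (forall y, Y y -> exists x, X x /\ bisim_pt P M x N y).

Definition letters_inter {Letter : Type} (P Q : letters Letter) : letters Letter :=
  fun p => P p /\ Q p.

From Stdlib Require Import Classical.

(* The interpolant K lives on the (P ∩ Q)-bisimilar pairs (m, n): it moves
   componentwise, and a letter of P is read off m while any other letter is
   read off n.  The first projection is then a P-bisimulation to M, and the
   second a Q-bisimulation to N, because on letters of P ∩ Q the components
   of a bisimilar pair agree. *)

Section BisimilarPoints.
Context {Letter : Type} {P : letters Letter} {M N : kmodel Letter}.

Lemma bisim_pt_val {m n p} :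
  bisim_pt P M m N n -> P p -> (val M m p <-> val N n p).
Proof.
  intros [B [HB Bmn]] Pp. destruct (HB _ _ Bmn) as [Hval _]. auto.
Qed.

Lemma bisim_pt_forth {m n m'} :
  bisim_pt P M m N n -> rel M m m' ->
  exists n', rel N n n' /\ bisim_pt P M m' N n'.
Proof.
  intros [B [HB Bmn]] Hm. destruct (HB _ _ Bmn) as [_ [Hforth _]].
  destruct (Hforth m' Hm) as [n' [Hn Bmn']]. exists n'. split; [exact Hn|].
  exists B. auto.
Qed.

Lemma bisim_pt_back {m n n'} :
  bisim_pt P M m N n -> rel N n n' ->
  exists m', rel M m m' /\ bisim_pt P M m' N n'.
Proof.
  intros [B [HB Bmn]] Hn. destruct (HB _ _ Bmn) as [_ [_ Hback]].
  destruct (Hback n' Hn) as [m' [Hm Bmn']]. exists m'. split; [exact Hm|].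
  exists B. auto.
Qed.

End BisimilarPoints.

Section Amalgam.
Context {Letter : Type} (P Q : letters Letter) (M N : kmodel Letter).

Definition linked (s : world M * world N) : Prop :=
  bisim_pt (letters_inter P Q) M (fst s) N (snd s).

Definition amalgam_rel (s t : world M * world N) : Prop :=
  rel M (fst s) (fst t) /\ rel N (snd s) (snd t) /\ linked t.

Definition amalgam_val (s : world M * world N) (p : Letter) : Prop :=
  (P p /\ val M (fst s) p) \/ (~ P p /\ val N (snd s) p).

Lemma amalgam_nonempty : inhabited (world M * world N).
Proof.
  destruct (world_nonempty _ M) as [m], (world_nonempty _ N) as [n].
  exact (inhabits (m, n)).
Qed.

Definition amalgam : kmodel Letter :=
  KModel Letter (world M * world N) amalgam_nonempty amalgam_rel amalgam_val.

Definition fst_link (m : world M) (s : world amalgam) : Prop :=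
  fst s = m /\ linked s.

Definition snd_link (s : world amalgam) (n : world N) : Prop :=
  snd s = n /\ linked s.

Lemma fst_link_bisim : is_bisim P M amalgam fst_link.
Proof.
  intros m [m0 n] [Hm Hlink]; simpl in Hm; subst m0.
  split; [|split].
  - intros p Pp. simpl. unfold amalgam_val. simpl. tauto.
  - intros m' Hm. destruct (bisim_pt_forth Hlink Hm) as [n' [Hn Hlink']].
    exists (m', n'). repeat split; assumption.
  - intros [m' n'] [Hm [_ Hlink']]. exists m'. repeat split; assumption.
Qed.

Lemma snd_link_bisim : is_bisim Q amalgam N snd_link.
Proof.
  intros [m n0] n [Hn Hlink]; simpl in Hn; subst n0.
  split; [|split].
  - intros p Qp. simpl. unfold amalgam_val. simpl.
    destruct (classic (P p)) as [Pp | nPp].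
    + pose proof (bisim_pt_val Hlink (conj Pp Qp)). tauto.
    + tauto.
  - intros [m' n'] [_ [Hn Hlink']]. exists n'. repeat split; assumption.
  - intros n' Hn. destruct (bisim_pt_back Hlink Hn) as [m' [Hm Hlink']].
    exists (m', n'). repeat split; assumption.
Qed.

Lemma linked_bisim_fst s : linked s -> bisim_pt P M (fst s) amalgam s.
Proof.
  intros Hlink. exists fst_link. split; [exact fst_link_bisim | split; auto].
Qed.

Lemma linked_bisim_snd s : linked s -> bisim_pt Q amalgam s N (snd s).
Proof.
  intros Hlink. exists snd_link. split; [exact snd_link_bisim | split; auto].
Qed.

End Amalgam.

Theorem mainTheorem4 (Letter : Type) (P Q : letters Letter)
  (M : kmodel Letter) (X : world M -> Prop)
  (N : kmodel Letter) (Y : world N -> Prop) :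
  bisim_team (letters_inter P Q) M X N Y ->
  exists (K : kmodel Letter) (Z : world K -> Prop),
    bisim_team P M X K Z /\ bisim_team Q K Z N Y.
Proof.
  intros [HX HY].
  exists (amalgam P Q M N).
  exists (fun s => X (fst s) /\ Y (snd s) /\ linked P Q M N s).
  split; split.
  - intros x Hx. destruct (HX x Hx) as [y [Hy Hlink]].
    exists (x, y). split; [auto | exact (linked_bisim_fst P Q M N (x, y) Hlink)].
  - intros s (Hx & _ & Hlink). exists (fst s).
    split; [exact Hx | exact (linked_bisim_fst P Q M N s Hlink)].
  - intros s (_ & Hy & Hlink). exists (snd s).
    split; [exact Hy | exact (linked_bisim_snd P Q M N s Hlink)].
  - intros y Hy. destruct (HY y Hy) as [x [Hx Hlink]].
    exists (x, y). split; [auto | exact (linked_bisim_snd P Q M N (x, y) Hlink)].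
Qed.
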